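(* Let $G$ be a finite group and let $A, B\subseteq G$ be subsets such that the multiplication map $A\times B\to G$, $(a,b)\mapsto ab$, is a bijection. Then the order of the subgroup of $G$ generated by $A$ is a multiple of $\mathrm{card}(A)$, and the order of the subgroup of $G$ generated by $B$ is a multiple of $\mathrm{card}(B)$. *)

From mathcomp Require Import all_boot all_fingroup.
Set Implicit Arguments. Unset Strict Implicit. Unset Printing Implicit Defensive.
Local Open Scope group_scope.

Definition mul_bijective (gT : finGroupType) (A B : {set gT}) : Prop :=
  forall g : gT, exists! p : gT * gT, [/\ p.1 \in A, p.2 \in B & p.1 * p.2 = g].

(* If A * B = G with unique factorization and H is a subgroup containing A,
   then every h in H factors as h = a b with b = a^-1 h in H, so H is in
   bijection with A x (B :&: H) and #|A| divides #|H|.  The statement for B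
   follows by inverting: (a, b) |-> a b is bijective on A x B iff
   (b', a') |-> b' a' is bijective on B^-1 x A^-1. *)

From mathcomp Require Import all_boot all_fingroup.

Set Implicit Arguments.
Unset Strict Implicit.

Local Open Scope group_scope.

Lemma mul_bijective_inv (gT : finGroupType) (A B : {set gT}) :
  mul_bijective A B -> mul_bijective B^-1 A^-1.
Proof.
move=> hb g; have [[a b] [[/= aA bB ab_g] uniq_ab]] := hb g^-1.
exists (b^-1, a^-1); split=> [|[x y] [/= xB yA xy_g]].
  by rewrite /= !memV_invg aA bB -invMg ab_g invgK.
have [-> ->] : (a, b) = (y^-1, x^-1).
  by apply: uniq_ab; split; rewrite /= -?mem_invg // -invMg xy_g.
by rewrite !invgK.
Qed.

Section SubgroupContainingLeftFactor.

Variables (gT : finGroupType) (A B : {set gT}) (H : {group gT}).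
Hypotheses (hb : mul_bijective A B) (sAH : A \subset H).

Let factors := setX A (B :&: H).

Lemma mul_bijective_in_injective :
  {in factors &, injective (fun p : gT * gT => p.1 * p.2)}.
Proof.
move=> p q; rewrite !inE => /and3P[pA pB _] /and3P[qA qB _] pq.
have [c [_ uniq_c]] := hb (p.1 * p.2).
by rewrite -(uniq_c p (And3 pA pB erefl)) -(uniq_c q (And3 qA qB (esym pq))).
Qed.

Lemma mul_bijective_subgroup_factor :
  [set p.1 * p.2 | p in factors] = H.
Proof.
apply/setP=> h; apply/imsetP/idP=> [[[a b]] | hH].
  rewrite !inE /= => /and3P[aA _ bH] ->.
  by rewrite groupM ?(subsetP sAH a aA).
have [[a b] [[/= aA bB ab_h] _]] := hb h.
have bH : b \in H by rewrite -(mulKg a b) ab_h groupM ?groupV ?(subsetP sAH a aA).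
by exists (a, b); rewrite // !inE aA bB bH.
Qed.

Lemma card_mul_bijective_subgroup : #|H| = (#|A| * #|B :&: H|)%N.
Proof.
by rewrite -{1}mul_bijective_subgroup_factor
  (card_in_imset mul_bijective_in_injective) cardsX.
Qed.

End SubgroupContainingLeftFactor.

Theorem lemma1p1 (gT : finGroupType) (A B : {set gT}) :
  mul_bijective A B ->
  (#|A| %| #|<<A>>|)%N /\ (#|B| %| #|<<B>>|)%N.
Proof.
move=> hb; split.
  by rewrite (card_mul_bijective_subgroup hb (subset_gen A)) dvdn_mulr.
have sBinvB : B^-1 \subset <<B>> by rewrite -invGid invSg subset_gen.
rewrite (card_mul_bijective_subgroup (mul_bijective_inv hb) sBinvB).
by rewrite card_invg dvdn_mulr.
Qed.
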